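(* Let $n$ be a positive integer and let $p$ be a prime number with $p>n^2/4+1$. Then there is no arithmetical structure $(r_1,\dots,r_n)$ on $K_n$ with $r_1=p$.
   Context: An arithmetical structure on the complete graph $K_n$ is an $n$-tuple $(r_1,r_2,\dots,r_n)$ of positive integers with $\gcd(r_1,\dots,r_n)=1$ such that $r_j$ divides $\sum_{i=1}^n r_i$ for every $j$. The entries are always listed so that $r_1\geq r_2\geq\dots\geq r_n$; thus $r_1$ is the largest value of the structure. *)

From mathcomp Require Import all_boot.
Set Implicit Arguments. Unset Strict Implicit. Unset Printing Implicit Defensive.

Definition arith_struct_Kn (n : nat) (r : seq nat) : Prop :=
  [/\ size r = n,
      all (fun x => 0 < x) r,
      sorted geq r,
      foldr gcdn 0 r = 1
    & all (fun x => x %| sumn r) r].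

From mathcomp Require Import all_boot.
From mathcomp Require Import zify.

(* Let r be such a structure with largest entry p and let S = sumn r = k * p.
   Split r into the m entries equal to p and the list s of the t = n - m
   entries smaller than p.  Each small entry is coprime to p and divides k * p,
   hence divides k; the list s is nonempty because gcd r = 1.  Thus
   sumn s = e * p with e = k - m >= 1, and every small entry is at most k.
   - If e >= 2, then e * p <= t * (m + e) gives 2 * p <= t * (m + 2), and
     AM-GM yields 8 * p <= (n + 2)^2, which contradicts n < p.
   - If e = 1, then s is a list of divisors of k = m + 1 < p summing to the
     prime p; such a list forces p <= (t - 1) * k + 1, and AM-GM yields
     4 * (p - 1) <= n^2.
   The file first proves these arithmetic facts about lists of divisors
   (ending with [small_entries_impossible]), then extracts the decomposition
   from an arithmetical structure, and derives the theorem. *)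

Lemma sumn_le_size_mul (s : seq nat) (c : nat) :
  (forall x, x \in s -> x <= c) -> sumn s <= size s * c.
Proof.
elim: s => [|x s IH] //= le_c.
have le_x := le_c x (mem_head x s).
have le_s : sumn s <= size s * c by apply: IH => y ys; apply: le_c; rewrite inE ys orbT.
by rewrite mulSn leq_add.
Qed.

Lemma sumn_filterC (a : pred nat) (s : seq nat) :
  sumn s = sumn (filter a s) + sumn (filter (predC a) s).
Proof. by rewrite -sumn_cat; apply/perm_sumn; rewrite perm_sym perm_filterC. Qed.

Lemma dvdn_foldr_gcdn (d : nat) (s : seq nat) :
  (forall x, x \in s -> d %| x) -> d %| foldr gcdn 0 s.
Proof.
elim: s => [|x s IH] //= dvd_all.
rewrite dvdn_gcd dvd_all ?mem_head //=.
by apply: IH => y ys; apply: dvd_all; rewrite inE ys orbT.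
Qed.

Lemma proper_divisor_le_half {d k : nat} : 0 < k -> d %| k -> d != k -> 2 * d <= k.
Proof.
move=> k_gt0 /dvdnP [q k_eq] d_neq; subst k.
by case: q k_gt0 d_neq => [|[|q]] k_gt0 d_neq; [lia | rewrite mul1n eqxx in d_neq | nia].
Qed.

(* If a list of divisors of [k], with [k] smaller than the prime [p], sums to
   [p], then [p] is at most [(size s - 1) * k + 1]: the entries equal to [k]
   contribute multiples of [k]; a single proper divisor divides [p], so it
   is 1; and two or more proper divisors, each at most [k / 2], together
   weigh no more than all but one [k]. *)
Lemma prime_sum_of_divisors {p k : nat} {s : seq nat} :
  prime p -> 0 < k -> k < p -> (forall x, x \in s -> 0 < x /\ x %| k) ->
  sumn s = p -> p <= (size s).-1 * k + 1.
Proof.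
move=> p_prime k_gt0 k_lt_p divs sum_p.
set A := filter (pred1 k) s; set B := filter (predC (pred1 k)) s.
have sumA : sumn A = size A * k.
  have A_nseq : A = nseq (size A) k by apply/all_pred1P; exact: filter_all.
  by rewrite {1}A_nseq sumn_nseq mulnC.
have sum_AB : p = size A * k + sumn B by rewrite -sumA -sum_p -sumn_filterC.
have size_AB : size s = size A + size B by rewrite !size_filter count_predC.
have divB d : d \in B -> d %| k /\ d <= k %/ 2.
  rewrite mem_filter /= => /andP [d_neq /divs [_ d_dvd]].
  by split=> //; have := proper_divisor_le_half k_gt0 d_dvd d_neq; lia.
have B_half : sumn B <= size B * (k %/ 2).
  by apply: sumn_le_size_mul => d /divB [].
move: sum_AB size_AB divB B_half; case: B => [|d [|d' B']] /= sum_AB size_AB divB B_half.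
- have k_eq1 : k = 1.
    apply/eqP; apply: contraT => k_neq1.
    have k_dvd_p : k %| p by rewrite sum_AB addn0 dvdn_mull.
    by have := (prime_nt_dvdP p_prime k_neq1 k_dvd_p); lia.
  by rewrite size_AB k_eq1; lia.
- have [d_k _] := divB d (mem_head d [::]).
  have d_eq1 : d = 1.
    apply/eqP; apply: contraT => d_neq1.
    have d_dvd_p : d %| p by rewrite sum_AB addn0 dvdn_add // dvdn_mull.
    have := (prime_nt_dvdP p_prime d_neq1 d_dvd_p); have := dvdn_leq k_gt0 d_k; lia.
  by rewrite size_AB addn1 /=; lia.
- by rewrite size_AB sum_AB; lia.
Qed.

(* The bound [n^2 < 4 * (p - 1)] forces [n < p], since [p^2 >= 4 * (p - 1)]. *)
Lemma lt_of_sqr_lt_4pred {n p : nat} : n ^ 2 < 4 * (p - 1) -> n < p.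
Proof.
move=> n_small; rewrite ltnNge; apply/negP => p_le_n.
have := nat_AGM2 p 2; have := leq_mul p_le_n p_le_n; rewrite -!mulnn in n_small *; nia.
Qed.

(* Write [sumn s = e * p]; the cases [e >= 2] and [e = 1] are treated by
   AM-GM, the latter through [prime_sum_of_divisors]. *)
Lemma small_entries_impossible {p k m : nat} {s : seq nat} :
  prime p -> 0 < size s -> (forall x, x \in s -> 0 < x /\ x %| k) ->
  sumn s + m * p = k * p -> (m + size s) ^ 2 < 4 * (p - 1) -> False.
Proof.
move=> p_prime s_nonempty divs sum_eq n_small.
have n_lt_p := lt_of_sqr_lt_4pred n_small.
have sum_gt0 : 0 < sumn s.
  case: s s_nonempty divs {sum_eq n_small n_lt_p} => [|x s] //= _ divs.
  by have [x_gt0 _] := divs x (mem_head x s); lia.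
have k_gt0 : 0 < k by move: sum_eq sum_gt0; case: (k) => //; lia.
have sum_le : sumn s <= size s * k.
  by apply: sumn_le_size_mul => x /divs [_ x_dvd]; apply: dvdn_leq.
have [e [k_eq sum_ep e_gt0]] : exists e, [/\ k = m + e, sumn s = e * p & 0 < e].
  exists (k - m); have m_le_k : m <= k by apply: contraTT sum_gt0; rewrite -ltnNge; nia.
  split; [lia | rewrite mulnBl; lia | nia].
have AGM u v := (nat_AGM2 u v).1.
case: (leqP 2 e) => [e_ge2 | e_lt2].
- have two_p : 2 * p <= size s * (m + 2).
    have : e * (2 * p) <= e * (size s * (m + 2)) by nia.
    by rewrite leq_pmul2l.
  have := AGM (size s) (m + 2); rewrite -!mulnn in n_small *; nia.
- have e_eq1 : e = 1 by lia.
  subst e; rewrite mul1n in sum_ep.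
  have k_lt_p : k < p by lia.
  have p_le := prime_sum_of_divisors p_prime k_gt0 k_lt_p divs sum_ep.
  have := AGM (size s).-1 k; have -> : (size s).-1 + k = m + size s by lia.
  lia.
Qed.

Section PrimeLargestEntry.

Variables (n p : nat) (r : seq nat).
Hypotheses (p_prime : prime p) (r_struct : arith_struct_Kn n r)
  (r_head : head 0 r = p).

Local Notation small := [seq x <- r | x < p].
Local Notation large := [seq x <- r | predC (fun x => x < p) x].

(* The list is nonempty because its head [p] is not the default value 0. *)
Lemma largest_mem : p \in r.
Proof.
case: r r_head => [|x s] /= x_eq; last by rewrite x_eq mem_head.
by move: (prime_gt0 p_prime); rewrite -x_eq.
Qed.

(* The list is sorted nonincreasingly, so its head bounds every entry. *)
Lemma entry_le_largest x : x \in r -> x <= p.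
Proof.
case: r_struct => _ _ sorted_r _ _; case: r r_head sorted_r => [|y s] //= -> path_s.
have /allP le_p := order_path_min (fun a b c ab bc => leq_trans bc ab) path_s.
by rewrite inE => /predU1P [-> | /le_p].
Qed.

Lemma large_eq_nseq : large = nseq (size large) p.
Proof.
apply/all_pred1P/allP => x; rewrite mem_filter /= -leqNgt => /andP [p_le_x x_in].
by rewrite eqn_leq p_le_x entry_le_largest.
Qed.

(* Since [gcd r = 1] and [p > 1], not every entry can be [p]. *)
Lemma small_nonempty : 0 < size small.
Proof.
case: r_struct => _ _ _ gcd_r _; rewrite lt0n size_eq0; apply/negP => /eqP small_nil.
have : p %| foldr gcdn 0 r.
  apply: dvdn_foldr_gcdn => x x_in.
  have : x \notin small by rewrite small_nil.
  rewrite mem_filter x_in andbT -leqNgt => p_le_x.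
  by rewrite (@anti_leq x p) ?p_le_x ?entry_le_largest.
by rewrite gcd_r dvdn1 => /eqP p_eq1; move: (prime_gt1 p_prime); rewrite p_eq1.
Qed.

Lemma sumn_multiple : sumn r = sumn r %/ p * p.
Proof.
case: r_struct => _ _ _ _ /allP dvd_sum; exact/esym/divnK/dvd_sum/largest_mem.
Qed.

(* A small entry is coprime to [p] and divides [k * p], hence divides [k]. *)
Lemma small_entry_dvd x : x \in small -> 0 < x /\ x %| sumn r %/ p.
Proof.
case: r_struct => _ /allP pos _ _ /allP dvd_sum.
rewrite mem_filter => /andP [x_lt_p x_in]; have x_gt0 := pos x x_in; split=> //.
have cop : coprime x p.
  by rewrite coprime_sym prime_coprime //; apply/negP => /(dvdn_leq x_gt0); rewrite leqNgt x_lt_p.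
by rewrite -(Gauss_dvdl _ cop) -sumn_multiple dvd_sum.
Qed.

Lemma prime_largest_decomposition :
  exists s m k, [/\ 0 < size s, forall x, x \in s -> 0 < x /\ x %| k,
                    sumn s + m * p = k * p & m + size s = n].
Proof.
exists small, (size large), (sumn r %/ p); split.
- exact: small_nonempty.
- exact: small_entry_dvd.
- by rewrite -sumn_multiple (sumn_filterC (fun x => x < p) r) {2}large_eq_nseq sumn_nseq mulnC.
- by case: r_struct => size_r _ _ _ _; rewrite -size_r !size_filter addnC count_predC.
Qed.

End PrimeLargestEntry.

Arguments prime_largest_decomposition {n p r}.

Theorem theorem3p2 (n p : nat) :
  0 < n -> prime p -> n ^ 2 < 4 * (p - 1) ->
  ~ (exists r : seq nat, arith_struct_Kn n r /\ head 0 r = p).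
Proof.
move=> _ p_prime n_small [r [r_struct r_head]].
have [s [m [k [s_nonempty divs sum_eq size_eq]]]] :=
  prime_largest_decomposition p_prime r_struct r_head.
rewrite -size_eq in n_small.
exact: small_entries_impossible p_prime s_nonempty divs sum_eq n_small.
Qed.
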